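(* Let $\xi$ be a random vector with support $\Xi\subset\mathbb{R}^l$ and distribution $P$, let $A\in\mathbb{R}^{n\times n}$, and let $B:\mathbb{R}^l\to\mathbb{R}^{n\times m}$, $M:\mathbb{R}^l\to\mathbb{R}^{m\times m}$, $N:\mathbb{R}^l\to\mathbb{R}^{m\times n}$ be continuous. Suppose there is a positive continuous function $\kappa$ with $\mathbb{E}[\kappa(\xi)]<+\infty$ such that for almost every $\xi$, $$\begin{pmatrix} z^T & u^T\end{pmatrix}\begin{pmatrix} A & B(\xi)\\ N(\xi) & M(\xi)\end{pmatrix}\begin{pmatrix} z\\ u\end{pmatrix}\ \ge\ \kappa(\xi)\big(\|z\|^2+\|u\|^2\big)\quad\forall z\in\mathbb{R}^n,\ u\in\mathbb{R}^m. \qquad(\ast)$$ Then the following hold, where in (ii) and (iii) $\xi$ is any point at which $(\ast)$ holds and $J$ is any subset of $\{1,\dots,m\}$: (i) $z^TAz\ge \sup_{\xi\in\Xi}\kappa(\xi)\|z\|^2$ for all $z\in\mathbb{R}^n$, and $u_J^TM_J(\xi)u_J\ge\kappa(\xi)\|u_J\|^2$ for all $u_J\in\mathbb{R}^{|J|}$ and all $J$; (ii) $A-B(\xi)U_J(M(\xi))N(\xi)$ is well defined and $z^T\big(A-B(\xi)U_J(M(\xi))N(\xi)\big)z\ge\kappa(\xi)\|z\|^2$ for all $z\in\mathbb{R}^n$; (iii) $\|M_J(\xi)^{-1}\|\le 1/\kappa(\xi)$ and $\|(A-B(\xi)U_J(M(\xi))N(\xi))^{-1}\|\le 1/\kapp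a(\xi)$.
   Context: $\|\cdot\|$ denotes the Euclidean norm on vectors and the induced 2-norm on matrices. For $J\subseteq\{1,\dots,m\}$, $D_J$ is the $m\times m$ diagonal matrix with $(D_J)_{jj}=1$ if $j\in J$ and $0$ otherwise; for an $m\times m$ matrix $M$ with $z^TMz>0$ for all $z\neq 0$ (not necessarily symmetric), $U_J(M):=(I-D_J(I-M))^{-1}D_J$. Equivalently, after permuting indices so that $J=\{1,\dots,|J|\}$, $U_J(M)=0$ if $J=\emptyset$ and $U_J(M)=\begin{pmatrix} M_J^{-1}&0\\0&0\end{pmatrix}$ otherwise, where $M_J$ is the $|J|\times|J|$ principal submatrix of $M$ indexed by $J$. *)

From HB Require Import structures.
From mathcomp Require Import all_boot all_order all_algebra.
From mathcomp Require Import all_classical all_reals all_analysis.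
Set Implicit Arguments. Unset Strict Implicit. Unset Printing Implicit Defensive.
Import Order.TTheory GRing.Theory Num.Theory.
Import numFieldNormedType.Exports.
Local Open Scope classical_set_scope.
Local Open Scope ring_scope.

Definition borel_rV (R : realType) (l : nat) :=
  g_sigma_algebraType (@open 'rV[R]_l).

Definition msupport (R : realType) (l : nat)
    (P : set (borel_rV R l) -> \bar R) : set 'rV[R]_l :=
  [set x | forall U : set 'rV[R]_l, open U -> U x -> (0 < P U)%E].

Definition sqnorm (R : realType) (k : nat) (z : 'cV[R]_k) : R :=
  \sum_i z i 0 ^+ 2.

Definition enorm (R : realType) (k : nat) (z : 'cV[R]_k) : R :=
  Num.sqrt (sqnorm z).

Definition qform (R : realType) (k : nat) (A : 'M[R]_k) (z : 'cV[R]_k) : R :=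
  (z^T *m A *m z) 0 0.

Definition opnorm2 (R : realType) (p q : nat) (A : 'M[R]_(p, q)) : R :=
  sup [set enorm (A *m x) | x in [set x : 'cV[R]_q | enorm x <= 1]].

Definition DJ (R : realType) (m : nat) (J : {set 'I_m}) : 'M[R]_m :=
  \matrix_(i, j) ((i == j) && (i \in J))%:R.

Definition UJpre (R : realType) (m : nat) (J : {set 'I_m}) (M : 'M[R]_m) : 'M[R]_m :=
  1%:M - DJ R J *m (1%:M - M).

Definition UJ (R : realType) (m : nat) (J : {set 'I_m}) (M : 'M[R]_m) : 'M[R]_m :=
  invmx (UJpre J M) *m DJ R J.

(* principal submatrix M_J, indexed by J enumerated in increasing order *)
Definition subJ (R : realType) (m : nat) (J : {set 'I_m}) (M : 'M[R]_m)
  : 'M[R]_#|J| :=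
  \matrix_(i, j) M (enum_val i) (enum_val j).

Definition cond_star (R : realType) (l n m : nat) (A : 'M[R]_n)
    (B : 'rV[R]_l -> 'M[R]_(n, m)) (M : 'rV[R]_l -> 'M[R]_m)
    (N : 'rV[R]_l -> 'M[R]_(m, n)) (kappa : 'rV[R]_l -> R) (xi : 'rV[R]_l) : Prop :=
  forall (z : 'cV[R]_n) (u : 'cV[R]_m),
    kappa xi * (sqnorm z + sqnorm u)
      <= qform (block_mx A (B xi) (N xi) (M xi)) (col_mx z u).

From HB Require Import structures.
From mathcomp Require Import all_boot all_order all_algebra.
From mathcomp Require Import all_classical all_reals all_analysis.
From mathcomp Require Import ring lra.
Import Order.TTheory GRing.Theory Num.Theory.
Import numFieldNormedType.Exports.
Local Open Scope classical_set_scope.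
Local Open Scope ring_scope.

(* Call C c-coercive when z^T C z >= c |z|^2.  Condition (star) says that the
   block matrix K(xi) is kappa(xi)-coercive.  Coercivity passes to principal
   submatrices E^T C E (E a selection of columns of the identity, E^T E = 1),
   which gives it for A, M(xi) and M_J(xi).  A c-coercive C satisfies
   c |v| <= |C v|, so it is invertible with |C^-1| <= 1/c.
   For the complement, v := U_J(M) N z satisfies (M v)_i = (N z)_i for i in J
   and v_i = 0 otherwise, so v^T M v = v^T N z (with N z replaced by 0 this also
   shows that I - D_J (I - M) is injective).  Hence the cross terms of the block
   form at (z, -v) cancel and z^T (A - B U_J(M) N) z, being that form, is at
   least c (|z|^2 + |v|^2).  Finally, the bound on A holds on a set of full
   measure, hence, kappa being continuous, on its closure, which contains the
   support of P. *)

Set Implicit Arguments.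
Unset Strict Implicit.

Section Selection.
Variable F : pzSemiRingType.

Lemma mxsub_colsub1 k p (f : 'I_p -> 'I_k) (C : 'M[F]_k) :
  mxsub f f C = (colsub f 1%:M)^T *m C *m colsub f 1%:M.
Proof. by rewrite trmx_mxsub trmx1 mul_rowsub_mx mul1mx -mxsub_mul mulmx1. Qed.

Lemma colsub1_isometry k p (f : 'I_p -> 'I_k) :
  injective f -> (colsub f 1%:M)^T *m colsub f 1%:M = 1%:M :> 'M[F]_p.
Proof.
move=> f_inj; rewrite trmx_mxsub trmx1 -mxsub_mul mulmx1.
by apply/matrixP => a b; rewrite !mxE (inj_eq f_inj).
Qed.

End Selection.

Lemma ker0_unitmx (F : fieldType) k (C : 'M[F]_k) :
  (forall v : 'cV[F]_k, C *m v = 0 -> v = 0) -> C \in unitmx.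
Proof.
move=> kerC; rewrite -unitmx_tr unitmxE unitfE; apply/negP => /det0P[w w_neq0].
move=> /(congr1 trmx); rewrite trmx_mul trmxK trmx0 => /kerC/eqP.
by rewrite trmx_eq0 (negbTE w_neq0).
Qed.

Section Coercive.
Variable R : realType.

Lemma sqnormE k (v : 'cV[R]_k) : sqnorm v = (v^T *m v) 0 0.
Proof. by rewrite /sqnorm mxE; apply: eq_bigr => i _; rewrite mxE expr2. Qed.

Lemma sqnorm_ge0 k (v : 'cV[R]_k) : 0 <= sqnorm v.
Proof. by apply: sumr_ge0 => i _; apply: sqr_ge0. Qed.

Lemma sqnorm0 k : sqnorm (0 : 'cV[R]_k) = 0.
Proof. by rewrite /sqnorm big1 // => i _; rewrite mxE expr0n. Qed.

Lemma sqnorm_eq0 k (v : 'cV[R]_k) : sqnorm v = 0 -> v = 0.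
Proof.
move=> v0; apply/matrixP => i j; rewrite (ord1 j) mxE.
have /eqP := psumr_eq0P (fun i _ => sqr_ge0 (v i 0)) v0 (i := i) isT.
by rewrite sqrf_eq0 => /eqP.
Qed.

Lemma sqnorm_col_mx k p (z : 'cV[R]_k) (u : 'cV[R]_p) :
  sqnorm (col_mx z u) = sqnorm z + sqnorm u.
Proof. by rewrite !sqnormE tr_col_mx mul_row_col mxE. Qed.

Lemma qformE k (C : 'M[R]_k) v : qform C v = \sum_i v i 0 * (C *m v) i 0.
Proof. by rewrite /qform -mulmxA mxE; apply: eq_bigr => i _; rewrite mxE. Qed.

Lemma qformN k (C : 'M[R]_k) v : qform C (- v) = qform C v.
Proof. by rewrite /qform [(- v)^T]linearN /= mulmxN !mulNmx opprK. Qed.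

Lemma qform_block_mx k p (A : 'M[R]_k) B N (M : 'M[R]_p) z u :
  qform (block_mx A B N M) (col_mx z u) =
  qform A z + (z^T *m B *m u) 0 0 + (u^T *m N *m z) 0 0 + qform M u.
Proof.
rewrite /qform tr_col_mx mul_row_block mul_row_col !mulmxDl !mxE.
by rewrite addrACA !addrA.
Qed.

Lemma qform_compress k p (E : 'M[R]_(k, p)) C v :
  qform (E^T *m C *m E) v = qform C (E *m v).
Proof. by rewrite /qform trmx_mul !mulmxA. Qed.

Definition coercive k (C : 'M[R]_k) (c : R) := forall v, c * sqnorm v <= qform C v.

Lemma coercive_compress k p (E : 'M[R]_(k, p)) C c :
  E^T *m E = 1%:M -> coercive C c -> coercive (E^T *m C *m E) c.
Proof.
move=> isoE coerC v; rewrite qform_compress.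
have -> : sqnorm v = sqnorm (E *m v).
  by rewrite !sqnormE trmx_mul -mulmxA (mulmxA E^T) isoE mul1mx.
exact: coerC.
Qed.

Lemma coercive_mxsub k p (f : 'I_p -> 'I_k) C c :
  injective f -> coercive C c -> coercive (mxsub f f C) c.
Proof. by move=> f_inj; rewrite mxsub_colsub1; apply/coercive_compress/colsub1_isometry. Qed.

Lemma coercive_ulblock k p (A : 'M[R]_k) B N (M : 'M[R]_p) c :
  coercive (block_mx A B N M) c -> coercive A c.
Proof.
move=> /(coercive_mxsub (@lshift_inj k p)).
by rewrite mxsubcr -usubmxEsub -lsubmxEsub -/(ulsubmx _) block_mxKul.
Qed.

Lemma coercive_drblock k p (A : 'M[R]_k) B N (M : 'M[R]_p) c :
  coercive (block_mx A B N M) c -> coercive M c.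
Proof.
move=> /(coercive_mxsub (@rshift_inj k p)).
by rewrite mxsubcr -dsubmxEsub -rsubmxEsub -/(drsubmx _) block_mxKdr.
Qed.

Lemma coercive_qform_eq0 k (C : 'M[R]_k) c v :
  0 < c -> coercive C c -> qform C v = 0 -> v = 0.
Proof.
move=> c_gt0 coerC qv0; apply: sqnorm_eq0; apply/eqP.
by rewrite eq_le sqnorm_ge0 andbT -(pmulr_rle0 _ c_gt0) -qv0 coerC.
Qed.

Lemma coercive_unitmx k (C : 'M[R]_k) c : 0 < c -> coercive C c -> C \in unitmx.
Proof.
move=> c_gt0 coerC; apply: ker0_unitmx => v Cv0.
by apply: (coercive_qform_eq0 c_gt0 coerC); rewrite /qform -mulmxA Cv0 mulmx0 mxE.
Qed.

Lemma coercive_sqnorm_mul k (C : 'M[R]_k) c v :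
  0 < c -> coercive C c -> c ^+ 2 * sqnorm v <= sqnorm (C *m v).
Proof.
move=> c_gt0 coerC; have := coerC v; rewrite qformE; set w := C *m v => cv.
(* [0 <= |c v - w|^2 = c^2|v|^2 - 2c v.w + |w|^2] with [c|v|^2 <= v.w] *)
have : 0 <= \sum_i (c * v i 0 - w i 0) ^+ 2 by apply: sumr_ge0 => i _; apply: sqr_ge0.
have -> : \sum_i (c * v i 0 - w i 0) ^+ 2 =
    c ^+ 2 * sqnorm v - 2 * c * \sum_i v i 0 * w i 0 + sqnorm w.
  rewrite /sqnorm !mulr_sumr -!sumrB -big_split /=; apply: eq_bigr => i _; ring.
nra.
Qed.

Lemma coercive_opnorm2_invmx k (C : 'M[R]_k) c :
  0 < c -> coercive C c -> opnorm2 (invmx C) <= c^-1.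
Proof.
move=> c_gt0 coerC; apply: ge_sup.
  by exists 0, 0; rewrite /= /enorm ?mulmx0 sqnorm0 sqrtr0 ?ler01.
move=> _ [x /= x_le1 <-]; set y := invmx C *m x.
have Cy : C *m y = x by rewrite /y mulKVmx // (coercive_unitmx c_gt0 coerC).
have := coercive_sqnorm_mul y c_gt0 coerC; rewrite Cy => cy.
have x_sq_le1 : sqnorm x <= 1.
  by move: x_le1; rewrite /enorm -{1}sqrtr1 ler_sqrt ?ler01.
have c_inv_ge0 : 0 <= c^-1 by rewrite invr_ge0 ltW.
rewrite /enorm -(ger0_norm c_inv_ge0) -sqrtr_sqr ler_sqrt ?sqr_ge0 //.
by rewrite exprVn -div1r ler_pdivlMr ?exprn_gt0 // mulrC (le_trans cy).
Qed.

Lemma subJE m (J : {set 'I_m}) (M : 'M[R]_m) : subJ J M = mxsub enum_val enum_val M.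
Proof. by apply/matrixP => a b; rewrite !mxE. Qed.

Lemma coercive_subJ m (J : {set 'I_m}) (M : 'M[R]_m) c :
  coercive M c -> coercive (subJ J M) c.
Proof. by rewrite subJE; apply: coercive_mxsub enum_val_inj. Qed.

Lemma DJ_mul m (J : {set 'I_m}) (w : 'cV[R]_m) i :
  (DJ R J *m w) i 0 = if i \in J then w i 0 else 0.
Proof.
have -> : DJ R J = diag_mx (\row_i (i \in J)%:R).
  by apply/matrixP => a b; rewrite !mxE andbC; case: (a \in J); case: (a == b).
by rewrite mul_diag_mx !mxE; case: (i \in J); rewrite ?mul1r ?mul0r.
Qed.

Lemma UJpre_mul m (J : {set 'I_m}) (M : 'M[R]_m) (v : 'cV[R]_m) i :
  (UJpre J M *m v) i 0 = if i \in J then (M *m v) i 0 else v i 0.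
Proof.
rewrite /UJpre mulmxBl mul1mx -mulmxA mulmxBl mul1mx mxE [in X in _ + X]mxE DJ_mul.
by case: ifP => _; rewrite ?mxE; [rewrite opprB addrC subrK | rewrite oppr0 addr0].
Qed.

Lemma qform_UJpre m (J : {set 'I_m}) (M : 'M[R]_m) v w :
  UJpre J M *m v = DJ R J *m w -> qform M v = (v^T *m w) 0 0.
Proof.
move/matrixP=> Pv; rewrite qformE [RHS]mxE; apply: eq_bigr => i _; rewrite [v^T _ _]mxE.
have := Pv i 0; rewrite UJpre_mul DJ_mul.
by case: ifP => _ ->; rewrite ?mul0r.
Qed.

Lemma UJpre_unitmx m (J : {set 'I_m}) (M : 'M[R]_m) c :
  0 < c -> coercive M c -> UJpre J M \in unitmx.
Proof.
move=> c_gt0 coerM; apply: ker0_unitmx => v Pv.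
apply: (coercive_qform_eq0 c_gt0 coerM).
by rewrite (@qform_UJpre _ J _ _ 0) ?mulmx0 ?mxE // Pv mulmx0.
Qed.

Lemma coercive_schur k p (A : 'M[R]_k) B N (M : 'M[R]_p) (J : {set 'I_p}) c :
  0 < c -> coercive (block_mx A B N M) c -> coercive (A - B *m UJ J M *m N) c.
Proof.
move=> c_gt0 coerK z; set v := UJ J M *m (N *m z).
have Pv : UJpre J M *m v = DJ R J *m (N *m z).
  by rewrite /v /UJ -mulmxA mulKVmx // (UJpre_unitmx J c_gt0 (coercive_drblock coerK)).
have -> : qform (A - B *m UJ J M *m N) z = qform (block_mx A B N M) (col_mx z (- v)).
  rewrite qform_block_mx qformN (qform_UJpre Pv) [(- v)^T]linearN /= mulmxN !mulNmx.
  rewrite /qform /v mulmxBr mulmxBl !mulmxA [LHS]mxE -addrA.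
  set w := (UJ J M *m N *m z)^T *m N *m z.
  by rewrite [(- w) 0 0]mxE addNr addr0.
have := coerK (col_mx z (- v)); rewrite sqnorm_col_mx.
have := sqnorm_ge0 (- v); nra.
Qed.

Lemma cond_star_coercive l n m (A : 'M[R]_n) B (M : 'rV[R]_l -> 'M[R]_m) N kappa x :
  cond_star A B M N kappa x -> coercive (block_mx A (B x) (N x) (M x)) (kappa x).
Proof. by move=> star v; rewrite -(vsubmxK v) sqnorm_col_mx; apply: star. Qed.

End Coercive.

Section Support.
Variables (R : realType) (l : nat) (mu : {measure set (borel_rV R l) -> \bar R}).

Lemma msupport_sub_closure (G : set 'rV[R]_l) :
  {ae mu, forall x, G x} -> msupport mu `<=` closure G.
Proof.
move=> [Nb [mNb muNb0 notG_Nb]] x x_supp B; rewrite nbhsE => -[U [oU Ux] UB].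
apply: contrapT => noGB.
have UNb : U `<=` Nb.
  by move=> t Ut; apply: notG_Nb => Gt; apply: noGB; exists t; split => //; apply: UB.
have : (mu U <= mu Nb)%E.
  by apply: le_measure => //; rewrite inE //; apply: sub_sigma_algebra.
by rewrite muNb0 leNgt x_supp.
Qed.

Lemma msupport_le (G : set 'rV[R]_l) (f : 'rV[R]_l -> R) (a : R) :
  continuous f -> {ae mu, forall x, G x} -> (forall x, G x -> f x <= a) ->
  forall x, msupport mu x -> f x <= a.
Proof.
move=> /continuous_closedP/(_ _ (@closed_le _ a)) /closure_id closed_f aeG G_le x.
by move=> /(msupport_sub_closure aeG) /(closureS G_le); rewrite -closed_f.
Qed.

End Support.

Unset Implicit Arguments.

Theorem lemma2p1 (R : realType) (l n m : nat)
  (P : probability (borel_rV R l) R)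
  (A : 'M[R]_n)
  (B : 'rV[R]_l -> 'M[R]_(n, m)) (M : 'rV[R]_l -> 'M[R]_m)
  (N : 'rV[R]_l -> 'M[R]_(m, n)) (kappa : 'rV[R]_l -> R) :
  continuous B -> continuous M -> continuous N ->
  continuous kappa -> (forall x, 0 < kappa x) ->
  (\int[P]_x (kappa x)%:E < +oo)%E ->
  {ae P, forall x : borel_rV R l, cond_star A B M N kappa x} ->
  (* (i) *)
  (forall z : 'cV[R]_n, forall x, msupport P x ->
      kappa x * sqnorm z <= qform A z) /\
  (forall x, cond_star A B M N kappa x ->
     forall (J : {set 'I_m}) (uJ : 'cV[R]_#|J|),
       kappa x * sqnorm uJ <= qform (subJ J (M x)) uJ) /\
  (* (ii) *)
  (forall x, cond_star A B M N kappa x -> forall J : {set 'I_m},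
     UJpre J (M x) \in unitmx /\
     forall z : 'cV[R]_n,
       kappa x * sqnorm z <= qform (A - B x *m UJ J (M x) *m N x) z) /\
  (* (iii) *)
  (forall x, cond_star A B M N kappa x -> forall J : {set 'I_m},
     subJ J (M x) \in unitmx /\
     opnorm2 (invmx (subJ J (M x))) <= (kappa x)^-1 /\
     (A - B x *m UJ J (M x) *m N x) \in unitmx /\
     opnorm2 (invmx (A - B x *m UJ J (M x) *m N x)) <= (kappa x)^-1).
Proof.
move=> _ _ _ kappa_cont kappa_gt0 _ ae_star.
have coerA x : cond_star A B M N kappa x -> coercive A (kappa x).
  by move/cond_star_coercive/coercive_ulblock.
have coerM x : cond_star A B M N kappa x -> coercive (M x) (kappa x).
  by move/cond_star_coercive/coercive_drblock.
have coerS x J : cond_star A B M N kappa x ->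
    coercive (A - B x *m UJ J (M x) *m N x) (kappa x).
  by move/cond_star_coercive/(coercive_schur J (kappa_gt0 x)).
split; [|split; [|split]].
- move=> z; apply: (msupport_le (f := fun y => kappa y * sqnorm z) _ ae_star).
    by move=> y; exact: (cvgM (kappa_cont y) (cvg_cst _)).
  by move=> y /coerA.
- by move=> x /coerM + J; apply: coercive_subJ.
- move=> x star J; split; last exact: coerS.
  exact: UJpre_unitmx (kappa_gt0 x) (coerM x star).
- move=> x star J; have coerMJ := coercive_subJ (J := J) (coerM x star).
  have coerSJ := coerS x J star.
  split; first exact: coercive_unitmx (kappa_gt0 x) coerMJ.
  split; first exact: coercive_opnorm2_invmx (kappa_gt0 x) coerMJ.
  split; first exact: coercive_unitmx (kappa_gt0 x) coerSJ.
  exact: coercive_opnorm2_invmx (kappa_gt0 x) coerSJ.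
Qed.
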